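(* Let $\Sigma$ be a finite alphabet and $C:\Sigma^k\to\Sigma^n$ a $(q,\delta,1,s)$-relaxed locally decodable code whose relaxed decoder is nonadaptive of the following form: for each $i\in[k]$ there is a probability distribution $\mathcal{Q}_i$ over $q$-element subsets of $[n]$ and, for each $Q\in\mathrm{supp}(\mathcal{Q}_i)$, a function $f_{i,Q}:\Sigma^Q\to\Sigma\cup\{\bot\}$; on input $y\in\Sigma^n$ and $i$, the decoder samples $Q\sim\mathcal{Q}_i$ and outputs $f_{i,Q}(y|_Q)$. Fix any $r\in\bigl(0,\frac{\delta(|\Sigma|-1)}{q|\Sigma|}(1-s|\Sigma|^q)\bigr)$. Define the decoder $\mathsf{Dec}'$ which, given oracle access to $y\in\Sigma^n$ and $i\in[k]$, samples $Q\sim\mathcal{Q}_i$ and outputs $g_{i,Q}(y|_Q)$ (with $g_{i,Q}$ as defined in the context). Then $\mathsf{Dec}'$ makes at most $q$ queries, and $C$ is a $(q,r,\varepsilon)$-locally decodable code with respect to $\mathsf{Dec}'$, where $\varepsilon=s|\Sigma|^{q}\bigl(1-\frac{1}{|\Sigma|}\bigr)+\frac{rq}{\delta}$.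
   Context: $\Delta(x,y)$ denotes Hamming distance on $\Sigma^n$; for $S\subseteq[n]$, $x|_S$ is the restriction of $x$ to coordinates in $S$. $C$ is a $(q,\delta,c,s)$-RLDC if there is a $q$-query decoder with outputs in $\Sigma\cup\{\bot\}$ such that for all $b\in\Sigma^k$, $i\in[k]$, $y$ with $\Delta(y,C(b))\le\delta n$: $\Pr[\mathsf{Dec}^{C(b)}(i)=b_i]\ge c$ and $\Pr[\mathsf{Dec}^y(i)\notin\{b_i,\bot\}]\le s$; here $c=1$. $C$ is a $(q,r,\varepsilon)$-LDC with respect to a $q$-query decoder $\mathsf{Dec}'$ with outputs in $\Sigma$ if for all $b$, $i$, and $y$ with $\Delta(y,C(b))\le rn$, $\Pr[\mathsf{Dec}'^y(i)\ne b_i]\le\varepsilon$. Heavy/light coordinates: $p_i(j):=\Pr_{Q\sim\mathcal{Q}_i}[j\in Q]$, $H_i:=\{j\in[n]:p_i(j)>q/(\delta n)\}$, $L_i:=[n]\setminus H_i$, and $L(Q):=Q\cap L_i$. For a light pattern $a\in\Sigma^{L(Q)}$, call $a$ good if there is a unique $\sigma\in\Sigma$ such that some $z\in\Sigma^Q$ with $z|_{L(Q)}=a$ has $f_{i,Q}(z)=\sigma$ (i.e., among all completions $z$ of $a$, $f_{i,Q}$ takes at least one non-$\bot$ value and all its non-$\bot$ values equal $\sigma$); otherwise $a$ is bad (either two completions give two different non-$\bot$ values, or all completions give $\bot$). For $\ell\in\Sigma^Q$ with $a=\ell|_{L(Q)}$: if $a$ is good, $g_{i,Q}(\ell):=\sigma$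 for the associated $\sigma$; if $a$ is bad, $g_{i,Q}(\ell)$ is a fresh uniformly random symbol of $\Sigma$. *)

From mathcomp Require Import all_boot all_order all_algebra.
Set Implicit Arguments. Unset Strict Implicit. Unset Printing Implicit Defensive.
Import Order.TTheory GRing.Theory Num.Theory.
Local Open Scope ring_scope.

Notation word Sigma n := {ffun 'I_n -> Sigma}.

Definition hdist (Sigma : finType) (n : nat) (x y : word Sigma n) : nat :=
  #|[set j | x j != y j]|.

Definition is_distr (R : numDomainType) (T : finType) (D : T -> R) : Prop :=
  (forall t, 0 <= D t) /\ \sum_(t : T) D t = 1.

(* h : Sigma^n -> X depends only on the coordinates in S, i.e. is a function of y|_S. *)
Definition local_on (Sigma : finType) (n : nat) (X : Type) (S : {set 'I_n})
  (h : word Sigma n -> X) : Prop :=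
  forall y y' : word Sigma n, (forall j, j \in S -> y j = y' j) -> h y = h y'.

(* Probability that the nonadaptive decoder (D, f) on oracle y produces an
   output (in Sigma ∪ {⊥}, ⊥ = None) satisfying P:  Pr_{Q~D}[P (f_Q(y|_Q))]. *)
Definition dec_prob (R : numDomainType) (Sigma : finType) (n : nat)
  (D : {set 'I_n} -> R) (f : {set 'I_n} -> word Sigma n -> option Sigma)
  (y : word Sigma n) (P : pred (option Sigma)) : R :=
  \sum_(Q : {set 'I_n} | P (f Q y)) D Q.

Definition query_prob (R : numDomainType) (n : nat) (D : {set 'I_n} -> R) (j : 'I_n) : R :=
  \sum_(Q : {set 'I_n} | j \in Q) D Q.

Definition heavy (R : numFieldType) (n : nat) (D : {set 'I_n} -> R) (q : nat) (delta : R)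
  : {set 'I_n} :=
  [set j | q%:R / (delta * n%:R) < query_prob D j].

Definition light_part (R : numFieldType) (n : nat) (D : {set 'I_n} -> R) (q : nat) (delta : R)
  (Q : {set 'I_n}) : {set 'I_n} :=
  Q :\: heavy D q delta.

Definition completion_values (Sigma : finType) (n : nat)
  (fQ : word Sigma n -> option Sigma) (L : {set 'I_n}) (y : word Sigma n) : {set Sigma} :=
  [set s | [exists z : word Sigma n, [forall j in L, z j == y j] && (fQ z == Some s)]].

(* Some sigma if the pattern y|_L is good with associated symbol sigma, None if bad. *)
Definition good_val (Sigma : finType) (n : nat)
  (fQ : word Sigma n -> option Sigma) (L : {set 'I_n}) (y : word Sigma n) : option Sigma :=
  let V := completion_values fQ L y in
  if #|V| == 1%N then [pick s in V] else None.

(* Pr[g_{i,Q}(y|_Q) = sigma]: deterministic on good patterns, uniform on bad ones. *)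
Definition g_prob {R : numFieldType} (Sigma : finType) (n : nat)
  (fQ : word Sigma n -> option Sigma) (L : {set 'I_n}) (y : word Sigma n) (s : Sigma) : R :=
  match good_val fQ L y with
  | Some t => (t == s)%:R
  | None => 1 / #|Sigma|%:R
  end.

Definition dec'_prob (R : numFieldType) (Sigma : finType) (n : nat)
  (D : {set 'I_n} -> R) (f : {set 'I_n} -> word Sigma n -> option Sigma)
  (q : nat) (delta : R) (y : word Sigma n) (s : Sigma) : R :=
  \sum_(Q : {set 'I_n}) D Q * g_prob (f Q) (light_part D q delta Q) y s.

Definition dec'_err (R : numFieldType) (Sigma : finType) (n : nat)
  (D : {set 'I_n} -> R) (f : {set 'I_n} -> word Sigma n -> option Sigma)
  (q : nat) (delta : R) (y : word Sigma n) (b : Sigma) : R :=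
  \sum_(s : Sigma | s != b) dec'_prob D f q delta y s.

(* Perfect completeness forces f_{i,Q}(C b) = b_i for every Q in the support, so the light
   pattern of C b on Q is either good with symbol b_i, or it has a completion decoded to a
   wrong symbol.  Hence Dec' errs on y only if (1) y differs from C b on a light coordinate
   of Q, which has probability at most r q / delta because every light coordinate is queried
   with probability at most q / (delta n); or (2) the light pattern of C b on Q has a wrong
   completion, in which case Dec' errs with probability 1 - 1/|Sigma|.  For (2), overwrite
   the heavy coordinates of C b, of which there are at most delta n, by a uniformly random
   word: the result stays within the soundness radius, and with probability at least
   |Sigma|^-q it agrees with the wrong completion on Q, so the decoder outputs a wrong
   symbol.  Soundness then bounds the probability of (2) by s |Sigma|^q. *)

From mathcomp Require Import all_boot all_order all_algebra.
From mathcomp Require Import ring lra.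
Import Order.TTheory GRing.Theory Num.Theory.
Set Implicit Arguments. Unset Strict Implicit.
Local Open Scope ring_scope.

Lemma is_distr_ge0 (R : numDomainType) (T : finType) (D : T -> R) :
  is_distr D -> forall t, 0 <= D t.
Proof. by case. Qed.

Lemma is_distr_support (R : realFieldType) (T : finType) (D : T -> R) (P : pred T) :
  is_distr D -> 1 <= \sum_(t | P t) D t -> forall t, 0 < D t -> P t.
Proof.
move=> [D_ge0 D_sum1] P_sure t Dt_gt0; apply/negPn/negP => nPt.
have Dt_le : D t <= \sum_(t' | ~~ P t') D t' by rewrite (bigD1 t) //= lerDl sumr_ge0.
have : \sum_(t' | P t') D t' + \sum_(t' | ~~ P t') D t' = 1 by rewrite -D_sum1 [RHS](bigID P).
lra.
Qed.

Section Queries.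

Variables (R : realFieldType) (n q : nat) (delta : R) (D : {set 'I_n} -> R).
Hypotheses (D_distr : is_distr D) (card_supp : forall Q, 0 < D Q -> #|Q| = q).

Lemma query_prob_ge0 j : 0 <= query_prob D j.
Proof. by apply: sumr_ge0 => Q _; apply: is_distr_ge0. Qed.

Lemma sum_query_prob : \sum_j query_prob D j = q%:R.
Proof.
have [D_ge0 D_sum1] := D_distr.
rewrite /query_prob (exchange_big_dep predT) //=.
transitivity (\sum_Q D Q * q%:R); last by rewrite -mulr_suml D_sum1 mul1r.
apply: eq_bigr => Q _; rewrite sumr_const mulr_natr.
have := D_ge0 Q; rewrite le0r => /predU1P [-> | DQ_gt0]; first by rewrite !mul0rn.
by rewrite -(card_supp DQ_gt0).
Qed.

Lemma sum_query_prob_le (S : {set 'I_n}) : \sum_(j in S) query_prob D j <= q%:R.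
Proof.
rewrite -sum_query_prob [leRHS](bigID (mem S)) /= lerDl.
by apply: sumr_ge0 => j _; apply: query_prob_ge0.
Qed.

Lemma card_heavy_le : 0 < delta -> #|heavy D q delta|%:R <= delta * n%:R.
Proof.
move=> delta_gt0; have [->|[j0 j0_heavy]] := set_0Vmem (heavy D q delta).
  by rewrite cards0 mulr_ge0 // ltW.
have n_gt0 : (0 < n)%N by case: j0 {j0_heavy} => j; apply: leq_trans.
have dn_gt0 : 0 < delta * n%:R by rewrite mulr_gt0 ?ltr0n.
have q_gt0 : 0 < q%:R :> R.
  apply: lt_le_trans (sum_query_prob_le [set j0]); rewrite big_set1.
  rewrite inE in j0_heavy; apply: le_lt_trans j0_heavy.
  by rewrite divr_ge0 // ltW.
have : q%:R / (delta * n%:R) * #|heavy D q delta|%:R <= q%:R.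
  rewrite mulr_natr -sumr_const; apply: le_trans (sum_query_prob_le (heavy D q delta)).
  by apply: ler_sum => j; rewrite inE => /ltW.
by rewrite mulrAC ler_pdivrMr // ler_pM2l.
Qed.

End Queries.

Section RelaxedOutput.

Variables (R : realFieldType) (Sigma : finType) (n : nat).
Implicit Types (fQ : word Sigma n -> option Sigma) (L : {set 'I_n}) (x y : word Sigma n).

Lemma completion_values_local fQ L x y :
  (forall j, j \in L -> x j = y j) -> completion_values fQ L x = completion_values fQ L y.
Proof.
move=> xy_L; apply/setP => t; rewrite !inE.
apply/existsP/existsP => -[z /andP [/forall_inP z_L fz]]; exists z; rewrite fz andbT;
  apply/forall_inP => j jL; rewrite (eqP (z_L j jL)) xy_L //.
Qed.

Lemma good_val_local fQ L x y :
  (forall j, j \in L -> x j = y j) -> good_val fQ L x = good_val fQ L y.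
Proof. by move=> xy_L; rewrite /good_val (completion_values_local fQ xy_L). Qed.

Lemma good_val_mem fQ L x (b : Sigma) : b \in completion_values fQ L x ->
  good_val fQ L x = if completion_values fQ L x \subset [set b] then Some b else None.
Proof.
rewrite /good_val; set V := completion_values _ _ _ => bV.
have [V_sub|V_nsub] := boolP (V \subset [set b]).
  have -> : V = [set b] by apply/eqP; rewrite eqEsubset V_sub sub1set.
  by rewrite cards1 eqxx; case: pickP => [t|/(_ b)]; rewrite !inE ?eqxx // => /eqP ->.
case: ifP => // /cards1P [w V_w]; move: V_nsub bV; rewrite V_w inE => /negP nsub /eqP bw.
by case: nsub; rewrite bw.
Qed.

Definition g_err fQ L y (b : Sigma) : R := \sum_(t | t != b) g_prob fQ L y t.

Lemma g_errE fQ L y (b : Sigma) :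
  g_err fQ L y b = if good_val fQ L y is Some t then (t != b)%:R else 1 - 1 / #|Sigma|%:R.
Proof.
rewrite /g_err /g_prob; case: good_val => [t|].
  have [-> | tb] := eqVneq t b.
    by rewrite big1 // => s; rewrite eq_sym => /negbTE ->.
  rewrite (bigD1 t) ?eqxx //= big1 ?addr0 // => s /andP [_].
  by rewrite eq_sym => /negbTE ->.
have Sigma_gt0 : (0 < #|Sigma|)%N by apply/card_gt0P; exists b.
rewrite sumr_const (eq_card (B := predC1 b)) // cardC1 -mulr_natr.
have -> : #|Sigma|%:R = (#|Sigma|.-1)%:R + 1 :> R by rewrite natr1 prednK.
by field; rewrite natr1 pnatr_eq0.
Qed.

Lemma one_sub_inv_card_ge0 : 0 <= 1 - 1 / #|Sigma|%:R :> R.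
Proof.
rewrite subr_ge0 div1r; have [->|Sigma_gt0] := posnP #|Sigma|; first by rewrite invr0.
by rewrite invf_le1 ?ltr0n // ler1n.
Qed.

Lemma g_err_le1 fQ L y (b : Sigma) : g_err fQ L y b <= 1.
Proof.
rewrite g_errE; case: good_val => [t|]; first by rewrite lern1 leq_b1.
by rewrite gerBl divr_ge0.
Qed.

Definition light_mismatch L x y : bool := [exists j in L, y j != x j].

Definition wrong_completion fQ L x (b : Sigma) : bool :=
  ~~ (completion_values fQ L x \subset [set b]).

Lemma g_err_le fQ L x y (b : Sigma) : fQ x = Some b ->
  g_err fQ L y b <=
    (light_mismatch L x y)%:R + (1 - 1 / #|Sigma|%:R) * (wrong_completion fQ L x b)%:R.
Proof.
move=> fx_b; have [_|/exists_inPn xy_L] := boolP (light_mismatch L x y).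
  by apply: le_trans (g_err_le1 _ _ _ _) _; rewrite lerDl mulr_ge0 ?one_sub_inv_card_ge0.
have b_val : b \in completion_values fQ L x.
  by rewrite inE; apply/existsP; exists x; rewrite fx_b eqxx andbT; apply/forall_inP.
rewrite g_errE (@good_val_local _ _ y x) => [|j /xy_L /negPn /eqP //].
rewrite (good_val_mem b_val) /wrong_completion add0r.
by case: ifP => _; rewrite ?eqxx ?mulr0 ?mulr1.
Qed.

End RelaxedOutput.

Arguments g_err {R Sigma n} fQ L y b.

Section Patching.

Variables (Sigma : finType) (n : nat).
Implicit Types (S : {set 'I_n}) (x u z : word Sigma n).

Definition patch S x u : word Sigma n := [ffun j => if j \in S then u j else x j].

Lemma hdist_patch S x u : (hdist (patch S x u) x <= #|S|)%N.
Proof.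
apply: subset_leq_card; apply/subsetP => j; rewrite inE ffunE.
by case: ifP => // _; rewrite eqxx.
Qed.

Lemma card_agree_on S z :
  #|[set u : word Sigma n | [forall j in S, u j == z j]]| = (#|Sigma| ^ #|~: S|)%N.
Proof.
pose F j := if j \in S then pred1 (z j) else predT.
rewrite (eq_card (B := family F)); last first.
  move=> u; rewrite !inE; apply/forall_inP/familyP => [u_S j | u_F j jS].
    by rewrite /F; case: ifP => // /u_S.
  by have := u_F j; rewrite /F jS.
rewrite card_family foldrE big_map big_enum /= -prod_nat_const [RHS]big_mkcond /=.
apply: eq_bigr => j _; rewrite /F inE; case: (j \in S) => /=; last exact: eq_card.
by rewrite -(card1 (z j)); apply: eq_card.
Qed.

Definition wrong_output (b : Sigma) (o : option Sigma) : bool := (o != Some b) && (o != None).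

Lemma card_patch_wrong_output (fQ : word Sigma n -> option Sigma) (Q H : {set 'I_n})
    (q : nat) x (b : Sigma) :
  local_on Q fQ -> (#|Q| <= q)%N -> wrong_completion fQ (Q :\: H) x b ->
  (#|Sigma| ^ n <=
     #|Sigma| ^ q * #|[set u : word Sigma n | wrong_output b (fQ (patch H x u))]|)%N.
Proof.
move=> fQ_local Q_le /subsetPn [t]; rewrite !inE => /existsP [z /andP [/forall_inP z_L /eqP fz_t]].
move=> t_neq_b; set S := Q :&: H.
have agree_wrong : [set u : word Sigma n | [forall j in S, u j == z j]] \subset
                   [set u : word Sigma n | wrong_output b (fQ (patch H x u))].
  apply/subsetP => u; rewrite !inE => /forall_inP u_S.
  rewrite (fQ_local _ z) => [|j jQ]; first by rewrite fz_t /wrong_output /= eqE /= t_neq_b.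
  rewrite ffunE; case: ifP => jH; first by apply/eqP; apply: u_S; rewrite inE jQ jH.
  by apply/esym/eqP; apply: z_L; rewrite inE jQ jH.
apply: leq_trans (leq_mul _ (subset_leq_card agree_wrong)); last exact: leqnn.
rewrite card_agree_on -{1}(card_ord n) -(cardsC S) expnD leq_mul2r.
have Sigma_gt0 : (0 < #|Sigma|)%N by apply/card_gt0P; exists b.
have S_le : (#|S| <= q)%N by rewrite (leq_trans _ Q_le) ?subset_leq_card ?subsetIl.
by rewrite leq_pexp2l ?orbT.
Qed.

End Patching.

Section RelaxedToLocal.

Variables (R : realFieldType) (Sigma : finType) (n q : nat) (delta : R).
Variables (D : {set 'I_n} -> R) (f : {set 'I_n} -> word Sigma n -> option Sigma).
Hypotheses (D_distr : is_distr D) (card_supp : forall Q, 0 < D Q -> #|Q| = q).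
Hypothesis delta_gt0 : 0 < delta.
Implicit Types (x y : word Sigma n) (b : Sigma).

Local Notation L Q := (light_part D q delta Q).
Local Notation H := (heavy D q delta).

Let D_ge0 := is_distr_ge0 D_distr.

Lemma dec'_errE y b :
  dec'_err D f q delta y b = \sum_Q D Q * g_err (f Q) (L Q) y b.
Proof.
by rewrite /dec'_err /dec'_prob exchange_big; apply: eq_bigr => Q _; rewrite mulr_sumr.
Qed.

Lemma dec'_err_le x y b : (forall Q, 0 < D Q -> f Q x = Some b) ->
  dec'_err D f q delta y b <=
    \sum_Q D Q * (light_mismatch (L Q) x y)%:R +
    (1 - 1 / #|Sigma|%:R) * \sum_Q D Q * (wrong_completion (f Q) (L Q) x b)%:R.
Proof.
move=> fx_b; rewrite dec'_errE mulr_sumr -big_split /=; apply: ler_sum => Q _.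
have := D_ge0 Q; rewrite le0r => /predU1P [-> | DQ_gt0]; first by rewrite !(mul0r, mulr0, addr0).
by rewrite mulrCA -mulrDr; apply: ler_wpM2l; [exact: D_ge0 | exact/g_err_le/fx_b].
Qed.

Lemma prob_light_mismatch_le x y (r : R) : 0 <= r -> (hdist y x)%:R <= r * n%:R ->
  \sum_Q D Q * (light_mismatch (L Q) x y)%:R <= r * q%:R / delta.
Proof.
move=> r_ge0 y_near; set Diff := [set j | y j != x j]; set c := q%:R / (delta * n%:R).
have c_ge0 : 0 <= c by rewrite divr_ge0 // mulr_ge0 // ltW.
have union_bound : \sum_Q D Q * (light_mismatch (L Q) x y)%:R <=
                   \sum_(j in Diff :\: H) query_prob D j.
  apply: le_trans (_ : \sum_Q D Q * \sum_(j in Diff :\: H) (j \in Q)%:R <= _).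
    apply: ler_sum => Q _; apply: ler_wpM2l; first exact: D_ge0.
    case/boolP: (light_mismatch _ _ _) => [/exists_inP [j] | _]; last exact: sumr_ge0.
    rewrite !inE => /andP [j_light jQ] yx_j.
    by rewrite (bigD1 j) ?inE ?yx_j ?j_light //= jQ lerDl sumr_ge0.
  under eq_bigr do rewrite mulr_sumr.
  rewrite exchange_big /=.
  apply: ler_sum => j _; rewrite /query_prob [leRHS]big_mkcond /=.
  by apply: ler_sum => Q _; case: (j \in Q); rewrite ?mulr1 ?mulr0.
have light_sum : \sum_(j in Diff :\: H) query_prob D j <= (hdist y x)%:R * c.
  apply: le_trans (_ : \sum_(j in Diff :\: H) c <= _).
    by apply: ler_sum => j; rewrite !inE -leNgt => /andP [].
  by rewrite sumr_const -[c *+ _]mulr_natl ler_wpM2r // ler_nat subset_leq_card // subsetDl.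
apply: le_trans (le_trans union_bound light_sum) _.
have [n0|n_gt0] := posnP n.
  have -> : c = 0 by rewrite /c n0 mulr0 invr0 mulr0.
  by rewrite mulr0 divr_ge0 // ?mulr_ge0 // ltW.
apply: le_trans (ler_wpM2r c_ge0 y_near) _; rewrite le_eqVlt; apply/orP; left; apply/eqP.
by rewrite /c; field; rewrite pnatr_eq0 -lt0n n_gt0 gt_eqF.
Qed.

Lemma prob_wrong_completion_le x b (s : R) :
  (forall Q, local_on Q (f Q)) ->
  (forall y, (hdist y x)%:R <= delta * n%:R -> dec_prob D f y (wrong_output b) <= s) ->
  \sum_Q D Q * (wrong_completion (f Q) (L Q) x b)%:R <= s * #|Sigma|%:R ^+ q.
Proof.
move=> f_local sound; set M := #|Sigma|%:R : R.
have M_gt0 : 0 < M by rewrite ltr0n; apply/card_gt0P; exists b.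
pose wrong Q u : R := (wrong_output b (f Q (patch H x u)))%:R.
have sound_patch u : \sum_Q D Q * wrong Q u <= s.
  apply: le_trans (sound (patch H x u) _); last first.
    by apply: le_trans (card_heavy_le D_distr card_supp delta_gt0); rewrite ler_nat hdist_patch.
  rewrite /dec_prob [leRHS]big_mkcond /=; apply: ler_sum => Q _.
  by rewrite /wrong; case: ifP; rewrite ?mulr1 ?mulr0.
have count Q : D Q * (wrong_completion (f Q) (L Q) x b)%:R * M ^+ n <=
               M ^+ q * (D Q * \sum_u wrong Q u).
  have := D_ge0 Q; rewrite le0r => /predU1P [-> | DQ_gt0]; first by rewrite !mul0r mulr0.
  rewrite mulrCA -mulrA; apply: ler_wpM2l; first exact: D_ge0.
  case/boolP: (wrong_completion _ _ _ _) => [wrongQ|_]; last first.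
    by rewrite mul0r mulr_ge0 ?exprn_ge0 ?sumr_ge0.
  have := card_patch_wrong_output (f_local Q) (eq_leq (card_supp DQ_gt0)) wrongQ.
  rewrite mul1r -(ler_nat R) natrM !natrX => /le_trans; apply.
  rewrite -/M; apply: ler_wpM2l; first by rewrite exprn_ge0 ?ler0n.
  rewrite -sum1_card natr_sum [leLHS]big_mkcond /=.
  by apply: ler_sum => u _; rewrite inE /wrong; case: ifP.
have : (\sum_Q D Q * (wrong_completion (f Q) (L Q) x b)%:R) * M ^+ n <= s * M ^+ q * M ^+ n.
  rewrite mulr_suml; apply: le_trans (ler_sum _ (fun Q _ => count Q)) _.
  rewrite -mulr_sumr; under eq_bigr do rewrite mulr_sumr.
  rewrite exchange_big /= mulrAC mulrC ler_pM2r ?exprn_gt0 //.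
  apply: le_trans (ler_sum _ (fun u _ => sound_patch u)) _.
  by rewrite sumr_const card_ffun card_ord -mulr_natr natrX.
by rewrite ler_pM2r // exprn_gt0.
Qed.

End RelaxedToLocal.

Theorem mainTheorem2 (R : realFieldType) (Sigma : finType) (k n q : nat)
  (C : word Sigma k -> word Sigma n) (delta s r : R)
  (D : 'I_k -> {set 'I_n} -> R)
  (f : 'I_k -> {set 'I_n} -> word Sigma n -> option Sigma) :
  0 < delta ->
  (* the decoder: Q ~ D_i over q-element subsets, output f_{i,Q}(y|_Q) *)
  (forall i, is_distr (D i)) ->
  (forall i Q, 0 < D i Q -> #|Q| = q) ->
  (forall i Q, local_on Q (f i Q)) ->
  (* perfect completeness (c = 1) *)
  (forall (b : word Sigma k) (i : 'I_k),
     dec_prob (D i) (f i) (C b) (pred1 (Some (b i))) >= 1) ->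
  (* relaxed soundness s *)
  (forall (b : word Sigma k) (i : 'I_k) (y : word Sigma n),
     (hdist y (C b))%:R <= delta * n%:R ->
     dec_prob (D i) (f i) y
       (fun o => (o != Some (b i)) && (o != None)) <= s) ->
  0 < r ->
  r < delta * (#|Sigma|%:R - 1) / (q%:R * #|Sigma|%:R) * (1 - s * #|Sigma|%:R ^+ q) ->
  (* Dec' makes at most q queries: g_{i,Q} reads only y|_{L(Q)}, |L(Q)| <= q *)
  (forall i Q, 0 < D i Q ->
     (#|light_part (D i) q delta Q| <= q)%N /\
     (forall y y' : word Sigma n,
        (forall j, j \in light_part (D i) q delta Q -> y j = y' j) ->
        forall t, g_prob (R:=R) (f i Q) (light_part (D i) q delta Q) y t
                = g_prob (R:=R) (f i Q) (light_part (D i) q delta Q) y' t)) /\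
  (* (q, r, eps)-LDC w.r.t. Dec' *)
  (forall (b : word Sigma k) (i : 'I_k) (y : word Sigma n),
     (hdist y (C b))%:R <= r * n%:R ->
     dec'_err (D i) (f i) q delta y (b i)
       <= s * #|Sigma|%:R ^+ q * (1 - 1 / #|Sigma|%:R) + r * q%:R / delta).
Proof.
(* The upper bound on r says exactly that the error bound is below 1 - 1/|Sigma|; the bound
   itself holds for every r >= 0. *)
move=> delta_gt0 D_distr card_supp f_local complete sound r_gt0 _.
split=> [i Q DQ_gt0 | b i y y_near].
  split; first by rewrite -(card_supp i Q DQ_gt0) subset_leq_card ?subsetDl.
  by move=> y y' yy' t; rewrite /g_prob (good_val_local _ yy').
have fx_b Q : 0 < D i Q -> f i Q (C b) = Some (b i).
  by move/(is_distr_support (D_distr i) (complete b i)) => /eqP.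
apply: le_trans (dec'_err_le q delta (D_distr i) y fx_b) _.
rewrite addrC lerD ?(prob_light_mismatch_le q (D_distr i) delta_gt0 (ltW r_gt0) y_near) //.
rewrite [leRHS]mulrC; apply: ler_wpM2l; first exact: one_sub_inv_card_ge0.
apply: (prob_wrong_completion_le (D_distr i) (card_supp i) delta_gt0 (f_local i)).
exact: sound.
Qed.
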